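(* Let $0<\mu<L_{\max}^{-1}$ with $L_{\max}=\max_i\|A_i\|_2^2$, and let $\{x^n\}$ be generated by GAITA (as in the context) from any $x^0\in\mathbf{R}^N$. For $n\in\mathbf{N}$ let $i=(n\bmod N)+1$ and $\Delta(x^n,x^{n+1})=T_\lambda(x^n)-T_\lambda(x^{n+1})$. Then $\Delta(x^n,x^{n+1})=0$ if and only if $x_i^{n+1}=x_i^n$.
   Context: Let $A\in\mathbf{R}^{m\times N}$ have columns $A_1,\dots,A_N$, $y\in\mathbf{R}^m$, $\lambda>0$, $q\in(0,1)$, and $T_\lambda(x)=\frac12\|Ax-y\|_2^2+\lambda\sum_{i=1}^N|x_i|^q$. For a step size $\mu>0$ set $\tau_{\mu,q}=\frac{2-q}{2-2q}(2\lambda\mu(1-q))^{\frac{1}{2-q}}$ and $\eta_{\mu,q}=(2\lambda\mu(1-q))^{\frac{1}{2-q}}$. For $z\in\mathbf{R}$ let $prox_{\mu,\lambda|\cdot|^q}(z)=\arg\min_{v\in\mathbf{R}}\{\frac{(z-v)^2}{2\mu}+\lambda|v|^q\}$ (a single point when $|z|\neq\tau_{\mu,q}$). Define $\mathcal{T}(z,w)$ as the unique element of $prox_{\mu,\lambda|\cdot|^q}(z)$ if $|z|\neq\tau_{\mu,q}$, and, if $|z|=\tau_{\mu,q}$, as $sgn(z)\eta_{\mu,q}$ when $w\neq0$ and $0$ when $w=0$ ($sgn(0)=0$). GAITA: given $x^0\in\mathbf{R}^N$, for $n=0,1,2,\dots$ let $i=(n\bmod N)+1$, $z_i^n=x_i^n-\mu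 A_i^T(Ax^n-y)$, $x_i^{n+1}=\mathcal{T}(z_i^n,x_i^n)$, $x_j^{n+1}=x_j^n$ for $j\neq i$. *)

From HB Require Import structures.
From mathcomp Require Import all_boot all_order all_algebra.
From mathcomp Require Import all_classical all_reals all_analysis.
Set Implicit Arguments. Unset Strict Implicit. Unset Printing Implicit Defensive.
Import Order.TTheory GRing.Theory Num.Theory.
Local Open Scope ring_scope.
Local Open Scope classical_set_scope.

Section GAITA.
Variables (R : realType) (m N : nat).
Variables (A : 'M[R]_(m, N)) (y : 'cV[R]_m) (lam q mu : R).

Definition resid (x : 'cV[R]_N) (j : 'I_m) : R := (A *m x) j 0 - y j 0.

Definition Tlam (x : 'cV[R]_N) : R :=
  2^-1 * (\sum_(j < m) resid x j ^+ 2) + lam * \sum_(i < N) (`|x i 0| `^ q).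

Definition colnorm2 (i : 'I_N) : R := \sum_(j < m) A j i ^+ 2.
Definition Lmax : R := \big[Num.max/0]_(i < N) colnorm2 i.

Definition tau : R :=
  (2 - q) / (2 - 2 * q) * ((2 * lam * mu * (1 - q)) `^ ((2 - q)^-1)).
Definition eta : R := (2 * lam * mu * (1 - q)) `^ ((2 - q)^-1).

Definition prox (z : R) : set R :=
  [set v | forall u : R,
     (z - v) ^+ 2 / (2 * mu) + lam * (`|v| `^ q)
       <= (z - u) ^+ 2 / (2 * mu) + lam * (`|u| `^ q)].

Definition Tmap (z w : R) : R :=
  if `|z| != tau then xget 0 (prox z)
  else if w != 0 then Num.sg z * eta else 0.

Definition zcoord (x : 'cV[R]_N) (i : 'I_N) : R :=
  x i 0 - mu * \sum_(j < m) A j i * resid x j.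

(* the sequence xs is generated by GAITA (index i = n mod N, 0-based) *)
Definition gaita_seq (xs : nat -> 'cV[R]_N) : Prop :=
  forall (n : nat) (i : 'I_N), (val i = n %% N)%N ->
    xs n.+1 i 0 = Tmap (zcoord (xs n) i) (xs n i 0) /\
    (forall j : 'I_N, j != i -> xs n.+1 j 0 = xs n j 0).

End GAITA.

From Pilot Require Import Defs.
From HB Require Import structures.
From mathcomp Require Import all_boot all_order all_algebra.
From mathcomp Require Import all_classical all_reals all_analysis.
From mathcomp Require Import ring lra.
Import Order.TTheory GRing.Theory Num.Theory.
Import numFieldNormedType.Exports.
Set Implicit Arguments. Unset Strict Implicit. Unset Printing Implicit Defensive.
Local Open Scope ring_scope.

(* The step changes only the coordinate i, from w to v, and with
   S = A_i^T (A x - y) the objective drops by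
     Delta = lam (|w|^q - |v|^q) - S (v - w) - ||A_i||^2 (v - w)^2 / 2.
   Whenever v <> w, v minimizes the proximal problem at z = w - mu S: off the
   threshold |z| = tau this is the definition of the thresholding map, and at
   the threshold sgn(z) eta is a minimizer because the objective, written in
   the radius |u| = a eta, reduces to the tangent-line bound
   a^q >= a (1 + (q - 1)(a - 1)).  Comparing v with the competitor w gives
   Delta >= (1 / (2 mu) - ||A_i||^2 / 2) (v - w)^2 > 0, since
   mu ||A_i||^2 <= mu L_max < 1. *)

Lemma continuous_normr_powR (R : realType) (q : R) :
  0 < q -> continuous (fun u : R => `|u| `^ q).
Proof.
move=> q_gt0 x.
have [->|x_neq0] := eqVneq x 0.
  apply/cvgrPdist_lt => e e_gt0; near=> t.
  rewrite normr0 powR0 ?gt_eqF// sub0r normrN ger0_norm ?powR_ge0//.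
  have [->|t_neq0] := eqVneq t 0; first by rewrite normr0 powR0 ?gt_eqF.
  have -> : e = (e `^ q^-1) `^ q by rewrite -powRrM mulVf ?gt_eqF// powRr1 ?ltW.
  apply: gt0_ltr_powR; rewrite ?nnegrE ?normr_ge0 ?powR_ge0//.
  near: t; apply/nbhs_normP; exists (e `^ q^-1); first by rewrite /= powR_gt0.
  by move=> t /=; rewrite sub0r normrN.
have near_powR : \forall u \near x, expR (q * ln `|u|) = `|u| `^ q.
  near=> u; rewrite /powR normr_eq0 ifF//; apply/negbTE.
  by near: u; exact: (cvgr_neq0 x cvg_id x_neq0).
apply: cvg_trans; first exact: (near_eq_cvg near_powR).
rewrite /powR normr_eq0 (negbTE x_neq0).
have ln_cont : {for x, continuous (fun u : R => q * ln `|u|)}.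
  apply: continuousM; first exact: cst_continuous.
  have : {for x, continuous (@ln R \o (fun u : R => `|u|))}.
    apply: continuous_comp; first exact: norm_continuous.
    by apply: continuous_ln; rewrite normr_gt0.
  by [].
exact: (continuous_comp ln_cont (@continuous_expR R _)).
Unshelve. all: end_near. Qed.

Section Minimizer.
Variable R : realType.

Lemma sqr_le_sqr_subr (z u : R) : 2 * `|z| <= `|u| -> z ^+ 2 <= (z - u) ^+ 2.
Proof.
move=> zu; rewrite -[z ^+ 2]real_normK ?num_real// -[(z - u) ^+ 2]real_normK ?num_real//.
rewrite ler_sqr ?nnegrE//; apply: le_trans (ler_dist_dist z u).
by rewrite [`|_ - _|]ler0_norm; have := normr_ge0 z; lra.
Qed.

Lemma exists_penalized_sqr_minimizer (g : R -> R) (c z : R) :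
  0 < c -> continuous g -> (forall u, 0 <= g u) -> g 0 = 0 ->
  exists v, forall u, (z - v) ^+ 2 / c + g v <= (z - u) ^+ 2 / c + g u.
Proof.
move=> c_gt0 g_cont g_ge0 g0.
pose f u := (z - u) ^+ 2 / c + g u.
have f_cont : continuous f.
  have zB_cont : continuous (fun u : R => z - u).
    by move=> u; apply: continuousB; [exact: cst_continuous | exact: cvg_id].
  move=> u; apply: (@continuousD _ _ _ (fun u => (z - u) ^+ 2 / c) g) => //.
  apply: (@continuousM _ _ (fun u => (z - u) ^+ 2) (fun=> c^-1)); last exact: cst_continuous.
  - by apply: continuousM; apply: zB_cont.
  - exact: g_cont.
have ab : - (2 * `|z|) <= 2 * `|z| by have := normr_ge0 z; lra.
have [v _ v_min] := EVT_min ab (continuous_subspaceT f_cont).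
have zero_in : (0 : R) \in `[- (2 * `|z|), 2 * `|z|]%R.
  by rewrite in_itv/=; apply/andP; split; lra.
exists v => u; rewrite -/(f v) -/(f u).
have [u_in|u_out] := boolP (u \in `[- (2 * `|z|), 2 * `|z|]%R); first exact: v_min.
apply: le_trans (v_min _ zero_in) _; rewrite /f g0 subr0 addr0.
rewrite -[leLHS]addr0; apply: lerD (g_ge0 u); rewrite ler_pM2r ?invr_gt0//.
apply: sqr_le_sqr_subr; move: u_out; rewrite in_itv/= negb_and -!ltNge => /orP[]?.
  by rewrite [`|u|]ltr0_norm; lra.
by rewrite [`|u|]gtr0_norm; lra.
Qed.

End Minimizer.

Lemma mul_tangent_le_powR (R : realType) (q a : R) : 0 < q -> q <= 1 -> 0 <= a ->
  a * (1 + (q - 1) * (a - 1)) <= a `^ q.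
Proof.
move=> q_gt0 q_le1; rewrite le0r => /orP[/eqP->|a_gt0]; first by rewrite mul0r powR_ge0.
rewrite -(mulr_powRB1 (ltW a_gt0) q_gt0) ler_pM2l// /powR gt_eqF//.
apply: le_trans (expR_ge1Dx _); rewrite lerD2l.
apply: ler_wnM2l; first by rewrite subr_le0.
by have := @le_ln1Dx R (a - 1); rewrite addrCA subrr addr0; apply; lra.
Qed.

Section Prox.
Variables (R : realType) (lam q mu : R).
Hypotheses (lam_gt0 : 0 < lam) (q_gt0 : 0 < q) (q_lt1 : q < 1) (mu_gt0 : 0 < mu).

Lemma prox_nonempty z : exists v, prox lam q mu z v.
Proof.
apply: exists_penalized_sqr_minimizer => [||u|]; rewrite ?mulr_gt0//.
- move=> u; apply: (@continuousM _ _ (fun=> lam) (fun u => `|u| `^ q)).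
    exact: cst_continuous.
  exact: continuous_normr_powR.
- by rewrite mulr_ge0 ?powR_ge0 ?ltW.
- by rewrite normr0 powR0 ?gt_eqF ?mulr0.
Qed.

Lemma prox_sufficient_decrease w S v :
  prox lam q mu (w - mu * S) v ->
  (v - w) ^+ 2 <= 2 * mu * (lam * (`|w| `^ q - `|v| `^ q) - S * (v - w)).
Proof.
set pw := `|w| `^ q; set pv := `|v| `^ q.
move=> /(_ w); rewrite -subr_ge0 => v_min; rewrite -subr_ge0.
have -> : 2 * mu * (lam * (pw - pv) - S * (v - w)) - (v - w) ^+ 2 =
    2 * mu * ((w - mu * S - w) ^+ 2 / (2 * mu) + lam * pw
              - ((w - mu * S - v) ^+ 2 / (2 * mu) + lam * pv)).
  by field; rewrite gt_eqF.
exact: mulr_ge0 (ltW (mulr_gt0 _ mu_gt0)) v_min.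
Qed.

Let e := Defs.eta lam q mu.
Let T := tau lam q mu.

Lemma eta_gt0 : 0 < e.
Proof. by rewrite /e /Defs.eta powR_gt0// !mulr_gt0// subr_gt0. Qed.

Lemma tau_eta : T * (2 - 2 * q) = (2 - q) * e.
Proof.
have q_neq : 2 - 2 * q != 0 by apply: lt0r_neq0; have := q_lt1; lra.
by rewrite /T /tau -/(Defs.eta lam q mu) -/e; field.
Qed.

Lemma eta_powR_q : 2 * mu * lam * e `^ q * (1 - q) = e ^+ 2.
Proof.
have eK : e `^ (2 - q) = 2 * lam * mu * (1 - q).
  have q2_gt0 : 0 < 2 - q by have := q_lt1; lra.
  by rewrite /e /Defs.eta -powRrM mulVf ?gt_eqF// powRr1// ltW// !mulr_gt0// subr_gt0.
have -> : 2 * mu * lam * e `^ q * (1 - q) = e `^ q * e `^ (2 - q) by rewrite eK; ring.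
rewrite -powRD; last by rewrite (gt_eqF eta_gt0) implybT.
by rewrite addrCA subrr addr0 -[2]/(2%:R) powR_mulrn// ltW ?eta_gt0.
Qed.

Lemma tau_radial_min r : 0 <= r ->
  (T - e) ^+ 2 / (2 * mu) + lam * e `^ q <= (T - r) ^+ 2 / (2 * mu) + lam * r `^ q.
Proof.
move=> r_ge0; have e_gt0 := eta_gt0.
have -> : r = r / e * e by rewrite mulfVK// gt_eqF.
have : 0 <= r / e by rewrite divr_ge0// ltW.
move: (r / e) => a a_ge0.
(* [tau_eta] and [eta_powR_q] eliminate [T] and [lam]; what remains is
   [e^2 (a^q - a (1 + (q - 1)(a - 1))) / (2 mu (1 - q))]. *)
have tangent := mul_tangent_le_powR q_gt0 (ltW q_lt1) a_ge0.
have q1_gt0 : 0 < 1 - q by rewrite subr_gt0.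
have q1_neq0 : 1 - q != 0 by rewrite gt_eqF.
have mu_neq0 : mu != 0 by rewrite gt_eqF.
have lam_eq : lam * e `^ q = e ^+ 2 / (2 * mu * (1 - q)).
  by rewrite -eta_powR_q; field; exact/andP.
have T_eq : T = (2 - q) * e / (2 * (1 - q)).
  by rewrite -tau_eta; field.
rewrite (powRM _ a_ge0 (ltW e_gt0)) mulrCA lam_eq T_eq -subr_ge0.
have -> : ((2 - q) * e / (2 * (1 - q)) - a * e) ^+ 2 / (2 * mu) +
      a `^ q * (e ^+ 2 / (2 * mu * (1 - q))) -
    (((2 - q) * e / (2 * (1 - q)) - e) ^+ 2 / (2 * mu) + e ^+ 2 / (2 * mu * (1 - q))) =
    e ^+ 2 * (a `^ q - a * (1 + (q - 1) * (a - 1))) / (2 * mu * (1 - q)).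
  by field; exact/andP.
apply: divr_ge0; first by rewrite mulr_ge0 ?sqr_ge0 ?subr_ge0.
by rewrite !mulr_ge0 ?ltW.
Qed.

Lemma tau_gt0 : 0 < T.
Proof.
have q22_gt0 : 0 < 2 - 2 * q by have := q_lt1; lra.
rewrite -(pmulr_lgt0 _ q22_gt0) tau_eta mulr_gt0 ?eta_gt0//.
by have := q_lt1; lra.
Qed.

Lemma prox_threshold z : `|z| = T -> prox lam q mu z (Num.sg z * e).
Proof.
move=> zT u; have z_neq0 : z != 0 by rewrite -normr_gt0 zT tau_gt0.
have -> : `|Num.sg z * e| = e by rewrite normrM normr_sg z_neq0 mul1r gtr0_norm ?eta_gt0.
have -> : (z - Num.sg z * e) ^+ 2 = (T - e) ^+ 2.
  by rewrite {1}(numEsg z) -mulrBr exprMn sqr_sg z_neq0 mul1r zT.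
apply: le_trans (tau_radial_min (normr_ge0 u)) _.
rewrite lerD2r ler_pM2r ?invr_gt0 ?mulr_gt0// -zT.
rewrite -[(_ - `|u|) ^+ 2]real_normK ?num_real// -[(z - u) ^+ 2]real_normK ?num_real//.
by rewrite ler_sqr ?nnegrE ?ler_dist_dist.
Qed.

Lemma Tmap_prox z w : Tmap lam q mu z w != w -> prox lam q mu z (Tmap lam q mu z w).
Proof.
rewrite /Tmap; case: ifPn => [_ _|/negPn/eqP zT].
  by apply: xgetPex; exact: prox_nonempty.
by case: ifPn => [_ _|/negPn/eqP -> /eqP//]; exact: prox_threshold.
Qed.

End Prox.

Section CoordinateUpdate.
Variables (R : realType) (m N : nat) (A : 'M[R]_(m, N)) (y : 'cV[R]_m) (lam q : R).
Variables (x x' : 'cV[R]_N) (i : 'I_N).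
Hypothesis x'_x : forall j, j != i -> x' j 0 = x j 0.

Let d := x' i 0 - x i 0.

Lemma resid_coord_update j : resid A y x' j = resid A y x j + A j i * d.
Proof.
rewrite /resid !mxE (bigD1 i)//= [X in _ = X - _ + _](bigD1 i)//=.
under eq_bigr => k /x'_x -> do []; rewrite /d; ring.
Qed.

Lemma sum_powR_coord_update :
  \sum_(k < N) `|x' k 0| `^ q = \sum_(k < N) `|x k 0| `^ q - `|x i 0| `^ q + `|x' i 0| `^ q.
Proof.
rewrite (bigD1 i)//= [X in _ = X - _ + _](bigD1 i)//=.
under eq_bigr => k /x'_x -> do []; ring.
Qed.

Lemma Tlam_coord_update :
  Tlam A y lam q x - Tlam A y lam q x' =
    lam * (`|x i 0| `^ q - `|x' i 0| `^ q)
    - (\sum_(j < m) A j i * resid A y x j) * d - colnorm2 A i * d ^+ 2 / 2.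
Proof.
have sqr_update : \sum_(j < m) resid A y x' j ^+ 2 = \sum_(j < m) resid A y x j ^+ 2
    + 2 * d * \sum_(j < m) A j i * resid A y x j + d ^+ 2 * colnorm2 A i.
  under eq_bigr do rewrite resid_coord_update.
  rewrite /colnorm2 !mulr_sumr -!big_split/=.
  by apply: eq_bigr => j _; ring.
by rewrite /Tlam sqr_update sum_powR_coord_update; field.
Qed.

End CoordinateUpdate.

Lemma colnorm2_le_Lmax (R : realType) (m N : nat) (A : 'M[R]_(m, N)) i :
  colnorm2 A i <= Lmax A.
Proof. by rewrite /Lmax (bigD1 i)//= le_max lexx. Qed.

Theorem lemma2 (R : realType) (m N : nat) (A : 'M[R]_(m, N)) (y : 'cV[R]_m)
    (lam q mu : R) (xs : nat -> 'cV[R]_N) :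
  0 < lam -> 0 < q -> q < 1 ->
  0 < mu -> mu * Lmax A < 1 ->
  gaita_seq A y lam q mu xs ->
  forall (n : nat) (i : 'I_N), (val i = n %% N)%N ->
    (Tlam A y lam q (xs n) - Tlam A y lam q (xs n.+1) = 0 <->
     xs n.+1 i 0 = xs n i 0).
Proof.
move=> lam_gt0 q_gt0 q_lt1 mu_gt0 mu_Lmax gaita n i ni.
have [step frame] := gaita n i ni.
split=> [no_decrease|fixed]; last first.
  suff -> : xs n.+1 = xs n by rewrite subrr.
  apply/matrixP => k l; rewrite (ord1 l).
  by have [->|/frame] := eqVneq k i.
apply/eqP/negPn/negP => moved.
have in_prox : prox lam q mu (zcoord A y mu (xs n) i) (xs n.+1 i 0).
  by rewrite step; apply: Tmap_prox => //; rewrite -step.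
have decrease := prox_sufficient_decrease mu_gt0 in_prox.
move: no_decrease; rewrite (Tlam_coord_update _ _ _ _ frame).
have d_gt0 : 0 < (xs n.+1 i 0 - xs n i 0) ^+ 2.
  by rewrite lt0r sqr_ge0 andbT sqrf_eq0 subr_eq0.
have mu_c : mu * colnorm2 A i < 1.
  by apply: le_lt_trans mu_Lmax; rewrite ler_pM2l // colnorm2_le_Lmax.
nra.
Qed.
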